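(* Let $k,\ell,n\in\mathbb{N}$ (with $k\ge 0$) and let $k'=(2\ell+1)k+\ell$. Then $$H\big(\partial(k,n)\,\big|\,\partial(k',n)\big)\le \mathbb{E}[M(k',n)]\cdot(2\ell+1)^2.$$
   Context: $S$ is simple symmetric random walk on $\mathbb{Z}^2$ started at $0$, $R(n)=\{S(0),\ldots,S(n)\}$. The inner boundary of $A\subset\mathbb{Z}^2$ is $\partial A=\{a\in A: a \text{ is at graph distance } 1 \text{ from some vertex of } \mathbb{Z}^2\setminus A\}$. For $z\in\mathbb{Z}^2$, $k\ge0$: $Q(z,k)=\{z+(j,j'): -k\le j,j'\le k\}$; $\Lambda(k)=\{(2k+1)z: z\in\mathbb{Z}^2\}$. $I(z,k,n)$ is the indicator of $\{\partial R(n)\cap Q(z,k)\ne\emptyset\}$, $M(k,n)=\sum_{z\in\Lambda(k)}I(z,k,n)$, and $\partial(k,n)$ denotes the random vector $(I(z,k,n))_{z\in\Lambda(k)\cap[-2n,2n]^2}$. Entropy: $H(X)=\mathbb{E}[-\log_2 p(X)]$ with $p(x)=\Pr[X=x]$, and conditional entropy $H(X\mid Y)=H(X,Y)-H(Y)$. *)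

From Stdlib Require Import Reals ZArith List Bool Lia Lra.
Import ListNotations.
Open Scope R_scope.

(* A path of n steps is a list of n directions in {0,1,2,3}; all 4^n paths
   are equally likely. *)
Definition dir (d : nat) : Z * Z :=
  match d with
  | 0%nat => (1%Z, 0%Z)
  | 1%nat => ((-1)%Z, 0%Z)
  | 2%nat => (0%Z, 1%Z)
  | _ => (0%Z, (-1)%Z)
  end.

Definition addZ2 (a b : Z * Z) : Z * Z := (fst a + fst b, snd a + snd b)%Z.

Fixpoint paths (n : nat) : list (list nat) :=
  match n with
  | O => [ [] ]
  | S m => flat_map (fun p => map (fun d => d :: p) [0%nat; 1%nat; 2%nat; 3%nat]) (paths m)
  end.

Fixpoint walk_from (x : Z * Z) (p : list nat) : list (Z * Z) :=
  x :: match p with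
       | [] => []
       | d :: q => walk_from (addZ2 x (dir d)) q
       end.

(* R(n) = {S(0),...,S(n)} (as a list; only membership matters) *)
Definition range (p : list nat) : list (Z * Z) := walk_from (0%Z, 0%Z) p.

Definition eqZ2 (a b : Z * Z) : bool := (Z.eqb (fst a) (fst b) && Z.eqb (snd a) (snd b))%bool.
Definition memZ2 (a : Z * Z) (l : list (Z * Z)) : bool := existsb (eqZ2 a) l.

Definition in_inner_boundary (A : list (Z * Z)) (a : Z * Z) : bool :=
  (memZ2 a A && existsb (fun d => negb (memZ2 (addZ2 a (dir d)) A)) [0%nat; 1%nat; 2%nat; 3%nat])%bool.

Definition inQ (z : Z * Z) (k : nat) (a : Z * Z) : bool :=
  (Z.leb (Z.abs (fst a - fst z)) (Z.of_nat k) && Z.leb (Z.abs (snd a - snd z)) (Z.of_nat k))%bool.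

Definition Ind (z : Z * Z) (k : nat) (p : list nat) : bool :=
  existsb (fun a => (in_inner_boundary (range p) a && inQ z k a)%bool) (range p).

Definition side (k : nat) : Z := (2 * Z.of_nat k + 1)%Z.

Definition Zrange (a b : Z) : list Z :=
  map (fun i => (a + Z.of_nat i)%Z) (seq 0 (Z.to_nat (b - a + 1))).

(* Lambda(k) ∩ [-2n,2n]^2, in a fixed order (as multipliers (i,j), z=(2k+1)(i,j)) *)
Definition lam_grid (k n : nat) : list (Z * Z) :=
  let N := (2 * Z.of_nat n)%Z in
  let I := filter (fun i => Z.leb (Z.abs (side k * i)) N) (Zrange (-N) N) in
  flat_map (fun i => map (fun j => (i, j)) I) I.

Definition lam_pt (k : nat) (ij : Z * Z) : Z * Z := (side k * fst ij, side k * snd ij)%Z.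

Definition bvec (k n : nat) (p : list nat) : list bool :=
  map (fun ij => Ind (lam_pt k ij) k p) (lam_grid k n).

(* Only z = (2k+1)(i,j) with
   |i|,|j| <= n+k+1 can have Q(z,k) meeting [-n,n]^2 ⊇ R(n), so the sum is
   written over that finite window (all other terms are 0). *)
Definition Mcount (k n : nat) (p : list nat) : nat :=
  let W := Zrange (- Z.of_nat (n + k + 1)) (Z.of_nat (n + k + 1)) in
  length (filter (fun ij => Ind (lam_pt k ij) k p) (flat_map (fun i => map (fun j => (i, j)) W) W)).

Definition sumR {A} (f : A -> R) (l : list A) : R := fold_right Rplus 0 (map f l).

Definition expect (n : nat) (X : list nat -> R) : R :=
  sumR (fun w => X w / 4 ^ n) (paths n).

Definition prob {A} (eqA : A -> A -> bool) (n : nat) (X : list nat -> A) (x : A) : R :=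
  INR (length (filter (fun w => eqA (X w) x) (paths n))) / 4 ^ n.

Definition log2 (x : R) : R := ln x / ln 2.

Definition entropy {A} (eqA : A -> A -> bool) (n : nat) (X : list nat -> A) : R :=
  expect n (fun w => - log2 (prob eqA n X (X w))).

Definition eqbl (x y : list bool) : bool :=
  if list_eq_dec Bool.bool_dec x y then true else false.

Definition eqbl2 (x y : list bool * list bool) : bool :=
  (eqbl (fst x) (fst y) && eqbl (snd x) (snd y))%bool.

Definition cond_entropy (n : nat) (X Y : list nat -> list bool) : R :=
  entropy eqbl2 n (fun w => (X w, Y w)) - entropy eqbl n Y.

From Stdlib Require Import Reals ZArith List Lia Lra Bool FinFun.
Import ListNotations.
Open Scope R_scope.

(** Every box [Q(z',k')], [z' ∈ Λ(k')], is the union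
    of the [(2l+1)^2] boxes [Q(z,k)], [z ∈ Λ(k)], that it contains, so a fine
    box meets [∂R(n)] only if its coarse box does.  Hence, given [∂(k',n)],
    the vector [∂(k,n)] is supported on the "covered" fine cells (those whose
    coarse box is flagged), and there are at most [(2l+1)^2 M(k',n)] of them.

    The theorem follows by applying Gibbs' inequality to the mask kernel of
    the coarse vector and taking expectations. *)

Lemma sumR_nil {A} (f : A -> R) : sumR f [] = 0.
Proof. reflexivity. Qed.

Lemma sumR_cons {A} (f : A -> R) a l : sumR f (a :: l) = f a + sumR f l.
Proof. reflexivity. Qed.

Lemma sumR_app {A} (f : A -> R) l1 l2 : sumR f (l1 ++ l2) = sumR f l1 + sumR f l2.
Proof.
  induction l1 as [|a l1 IH]; simpl app; rewrite ?sumR_cons, ?IH, ?sumR_nil; lra.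
Qed.

Lemma sumR_map {A B} (f : B -> R) (g : A -> B) l :
  sumR f (map g l) = sumR (fun x => f (g x)) l.
Proof. unfold sumR. now rewrite map_map. Qed.

Lemma sumR_ext {A} (f g : A -> R) l :
  (forall x, In x l -> f x = g x) -> sumR f l = sumR g l.
Proof.
  induction l as [|a l IH]; intros H; [reflexivity|].
  rewrite !sumR_cons, H, IH; auto with datatypes.
Qed.

Lemma sumR_le {A} (f g : A -> R) l :
  (forall x, In x l -> f x <= g x) -> sumR f l <= sumR g l.
Proof.
  induction l as [|a l IH]; intros H; rewrite ?sumR_cons; [apply Rle_refl|].
  apply Rplus_le_compat; auto with datatypes.
Qed.

Lemma sumR_plus {A} (f g : A -> R) l :
  sumR (fun x => f x + g x) l = sumR f l + sumR g l.
Proof. induction l as [|a l IH]; rewrite ?sumR_cons, ?IH; cbv beta; rewrite ?sumR_nil; lra. Qed.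

Lemma sumR_scal {A} (f : A -> R) c l :
  sumR (fun x => c * f x) l = c * sumR f l.
Proof. induction l as [|a l IH]; rewrite ?sumR_cons, ?IH; cbv beta; rewrite ?sumR_nil; lra. Qed.

Lemma sumR_minus {A} (f g : A -> R) l :
  sumR (fun x => f x - g x) l = sumR f l - sumR g l.
Proof.
  rewrite (sumR_ext _ (fun x => f x + -1 * g x)) by (intros; ring).
  rewrite sumR_plus, sumR_scal. ring.
Qed.

Lemma sumR_zero {A} (f : A -> R) l : (forall x, In x l -> f x = 0) -> sumR f l = 0.
Proof.
  induction l as [|a l IH]; intros H; [reflexivity|].
  rewrite sumR_cons, H, IH; auto with datatypes. lra.
Qed.

Lemma sumR_swap {A B} (G : A -> B -> R) l1 l2 :
  sumR (fun a => sumR (G a) l2) l1 = sumR (fun b => sumR (fun a => G a b) l1) l2.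
Proof.
  induction l1 as [|a l1 IH].
  - symmetry. now apply sumR_zero.
  - rewrite sumR_cons, IH, <- sumR_plus. reflexivity.
Qed.

Lemma sumR_const1 {A} (l : list A) : sumR (fun _ => 1) l = INR (length l).
Proof.
  induction l as [|a l IH]; [reflexivity|].
  rewrite sumR_cons, IH. simpl length. rewrite S_INR. lra.
Qed.

Definition indicator (b : bool) : R := if b then 1 else 0.

Lemma length_filter_sumR {A} (f : A -> bool) l :
  INR (length (filter f l)) = sumR (fun x => indicator (f x)) l.
Proof.
  induction l as [|a l IH]; [reflexivity|].
  rewrite sumR_cons, <- IH. simpl. unfold indicator.
  destruct (f a); simpl length; rewrite ?S_INR; lra.
Qed.

Lemma sumR_onehot {A} (eqA : A -> A -> bool) (eqA_spec : forall a b, eqA a b = true <-> a = b)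
    (U : list A) (x : A) (f : A -> R) :
  NoDup U -> In x U -> sumR (fun v => indicator (eqA x v) * f v) U = f x.
Proof.
  induction U as [|u U IH]; intros Hnd Hin; [destruct Hin|].
  inversion Hnd as [|? ? Hu HU]; subst.
  rewrite sumR_cons. destruct (eqA x u) eqn:E.
  - apply eqA_spec in E; subst u.
    rewrite sumR_zero; [unfold indicator; ring|].
    intros v Hv. destruct (eqA x v) eqn:F; [apply eqA_spec in F; subst; contradiction|].
    unfold indicator; ring.
  - destruct Hin as [Hux|Hin]; [subst u; rewrite (proj2 (eqA_spec x x) eq_refl) in E; discriminate|].
    rewrite IH by auto. unfold indicator; ring.
Qed.

(** [cnt eqA Om Z w] is the number of samples in [Om] on which the random
    variable [Z] takes the same value as at [w]; with the uniform measure on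
    [Om], the probability of [{Z = Z w}] is [cnt/|Om|]. *)
Definition cnt {W A} (eqA : A -> A -> bool) (Om : list W) (Z : W -> A) (w : W) : nat :=
  length (filter (fun w' => eqA (Z w') (Z w)) Om).

Lemma cnt_pos {W A} (eqA : A -> A -> bool) (Om : list W) (Z : W -> A) w :
  In w Om -> eqA (Z w) (Z w) = true -> 0 < INR (cnt eqA Om Z w).
Proof.
  intros Hw He. apply lt_0_INR. unfold cnt.
  assert (Hf : In w (filter (fun w' => eqA (Z w') (Z w)) Om)) by (apply filter_In; auto).
  destruct (filter _ Om); [destruct Hf | simpl; lia].
Qed.

Definition eq_pair {A B} (eqA : A -> A -> bool) (eqB : B -> B -> bool) (p q : A * B) : bool :=
  eqA (fst p) (fst q) && eqB (snd p) (snd q).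

Lemma ln2_pos : 0 < ln 2.
Proof. pose proof ln_lt_2. lra. Qed.

Lemma ln_le_sub1 x : 0 < x -> ln x <= x - 1.
Proof. intros Hx. pose proof (exp_ineq1_le (ln x)) as H. rewrite exp_ln in H; lra. Qed.

Lemma log2_half_pow c : log2 ((/ 2) ^ c) = - INR c.
Proof.
  unfold log2. rewrite ln_pow, ln_Rinv by lra.
  pose proof ln2_pos. field. lra.
Qed.

(** Gibbs' inequality in counting form.  [X] and [Y] are random variables on
    the uniform sample space [Om], [q] is a sub-stochastic kernel from values
    of [Y] to values of [X] (supported on the enumeration [U] of possible
    values of [X]).  Then the conditional entropy of [X] given [Y], written as
    a sum of log-ratios of counts, is at most the cross entropy of [q]. *)
Section Gibbs.

Variables (W A B : Type) (eqA : A -> A -> bool) (eqB : B -> B -> bool).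
Hypothesis eqA_spec : forall a b, eqA a b = true <-> a = b.
Hypothesis eqB_spec : forall a b, eqB a b = true <-> a = b.
Variables (Om : list W) (X : W -> A) (Y : W -> B) (U : list A) (q : A -> B -> R).
Hypothesis U_NoDup : NoDup U.
Hypothesis X_in_U : forall w, In w Om -> In (X w) U.
Hypothesis q_nonneg : forall x y, 0 <= q x y.
Hypothesis q_mass : forall y, sumR (fun x => q x y) U <= 1.

Let cY (w : W) : R := INR (cnt eqB Om Y w).
Let cXY (w : W) : R := INR (cnt (eq_pair eqA eqB) Om (fun w => (X w, Y w)) w).

Lemma eqA_refl a : eqA a a = true.
Proof. now apply eqA_spec. Qed.

Lemma eqB_sym a b : eqB a b = eqB b a.
Proof.
  destruct (eqB a b) eqn:E, (eqB b a) eqn:F; auto.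
  - apply eqB_spec in E. subst. now rewrite <- F, (proj2 (eqB_spec b b) eq_refl).
  - apply eqB_spec in F. subst. now rewrite <- E, (proj2 (eqB_spec a a) eq_refl).
Qed.

(** On the event [{Y = y}], each value [x] of [X] is hit exactly [cXY] times,
    so the weights [q (X w) y / cXY w] add up to at most [sum_x q x y <= 1]. *)
Lemma fibre_mass y :
  sumR (fun w => indicator (eqB y (Y w)) * (q (X w) y / cXY w)) Om <= 1.
Proof.
  set (D := fun x => INR (length (filter (fun w => eqA (X w) x && eqB y (Y w)) Om))).
  assert (HD : forall w, eqB y (Y w) = true -> cXY w = D (X w)).
  { intros w E. apply eqB_spec in E. subst y. unfold cXY, D, cnt, eq_pair.
    do 2 f_equal. apply filter_ext. intros w'. simpl. now rewrite (eqB_sym (Y w)). }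
  rewrite (sumR_ext _ (fun w => sumR (fun x => indicator (eqA (X w) x) *
                        (indicator (eqB y (Y w)) * (q x y / D x))) U)).
  2:{ intros w Hw. rewrite (sumR_onehot eqA eqA_spec) by auto.
      destruct (eqB y (Y w)) eqn:E; [now rewrite HD | unfold indicator; ring]. }
  rewrite sumR_swap. eapply Rle_trans; [|apply (q_mass y)]. apply sumR_le. intros x _.
  rewrite (sumR_ext _ (fun w => q x y / D x * indicator (eqA (X w) x && eqB y (Y w))))
    by (intros; destruct (eqA _ _), (eqB _ _); unfold indicator; simpl; ring).
  rewrite sumR_scal, <- length_filter_sumR. fold (D x).
  pose proof (q_nonneg x y).
  destruct (Req_dec (D x) 0) as [E|E]; [rewrite E; lra | right; field; auto].
Qed.

(** Summing [fibre_mass] over the values of [Y]: the likelihood ratio of [q]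
    against the empirical conditional law has total mass at most [|Om|]. *)
Lemma ratio_mass : sumR (fun w => cY w * q (X w) (Y w) / cXY w) Om <= INR (length Om).
Proof.
  rewrite (sumR_ext _ (fun w => sumR (fun w' => indicator (eqB (Y w) (Y w')) *
                                          (q (X w) (Y w) / cXY w)) Om)).
  2:{ intros w _.
      rewrite (sumR_ext _ (fun w' => q (X w) (Y w) / cXY w * indicator (eqB (Y w') (Y w))))
        by (intros; rewrite eqB_sym; ring).
      rewrite sumR_scal. unfold cY, cnt. rewrite length_filter_sumR. unfold Rdiv. ring. }
  rewrite sumR_swap, <- sumR_const1. apply sumR_le. intros w' _.
  eapply Rle_trans; [|apply (fibre_mass (Y w'))]. right. apply sumR_ext. intros w _.
  rewrite (eqB_sym (Y w')). destruct (eqB (Y w) (Y w')) eqn:E; unfold indicator; [|ring].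
  apply eqB_spec in E. rewrite E. ring.
Qed.

Theorem gibbs_counts :
  (forall w, In w Om -> 0 < q (X w) (Y w)) ->
  sumR (fun w => log2 (cY w) - log2 (cXY w)) Om <= sumR (fun w => - log2 (q (X w) (Y w))) Om.
Proof.
  intros q_pos.
  assert (Hpt : forall w, In w Om ->
    log2 (cY w) - log2 (cXY w) - - log2 (q (X w) (Y w)) <= / ln 2 * (cY w * q (X w) (Y w) / cXY w - 1)).
  { intros w Hw.
    assert (h1 : 0 < cY w) by (apply cnt_pos; auto; now apply eqB_spec).
    assert (h2 : 0 < cXY w) by (apply cnt_pos; auto; unfold eq_pair; now rewrite eqA_refl, (proj2 (eqB_spec _ _) eq_refl)).
    pose proof (q_pos w Hw) as h3.
    assert (Hratio : 0 < cY w * q (X w) (Y w) / cXY w)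
      by (apply Rdiv_lt_0_compat; [apply Rmult_lt_0_compat|]; auto).
    pose proof (ln_le_sub1 _ Hratio) as Hln.
    unfold Rdiv in Hln. rewrite !ln_mult, ln_Rinv in Hln; try apply Rinv_0_lt_compat; try nra.
    unfold log2, Rdiv. pose proof ln2_pos.
    apply (Rmult_le_reg_l (ln 2)); auto.
    replace (ln 2 * (ln (cY w) * / ln 2 - ln (cXY w) * / ln 2 - - (ln (q (X w) (Y w)) * / ln 2)))
      with (ln (cY w) + ln (q (X w) (Y w)) + - ln (cXY w)) by (field; lra).
    rewrite <- Rmult_assoc, Rinv_r, Rmult_1_l by lra. lra. }
  assert (Htot : sumR (fun w => / ln 2 * (cY w * q (X w) (Y w) / cXY w - 1)) Om <= 0).
  { rewrite sumR_scal, sumR_minus, sumR_const1.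
    pose proof ratio_mass. pose proof ln2_pos.
    assert (0 < / ln 2) by (apply Rinv_0_lt_compat; auto). nra. }
  apply Rminus_le. rewrite <- sumR_minus. eapply Rle_trans; [apply sumR_le, Hpt|exact Htot].
Qed.

End Gibbs.

Lemma entropy_counts {A} (eqA : A -> A -> bool) n (Z : list nat -> A) :
  (forall x, eqA x x = true) ->
  entropy eqA n Z =
  / 4 ^ n * sumR (fun w => log2 (4 ^ n) - log2 (INR (cnt eqA (paths n) Z w))) (paths n).
Proof.
  intros Hrefl. unfold entropy, expect. rewrite <- sumR_scal. apply sumR_ext. intros w Hw.
  assert (Hc : 0 < INR (cnt eqA (paths n) Z w)) by (apply cnt_pos; auto).
  assert (HN : 0 < 4 ^ n) by (apply pow_lt; lra).
  unfold prob, log2. fold (cnt eqA (paths n) Z w). unfold Rdiv.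
  rewrite ln_mult, ln_Rinv by (try apply Rinv_0_lt_compat; lra).
  pose proof ln2_pos. field. lra.
Qed.

Lemma eqbl_spec x y : eqbl x y = true <-> x = y.
Proof. unfold eqbl. destruct (list_eq_dec bool_dec x y); split; congruence. Qed.

Lemma cond_entropy_counts n (X Y : list nat -> list bool) :
  cond_entropy n X Y =
  / 4 ^ n * sumR (fun w => log2 (INR (cnt eqbl (paths n) Y w))
                           - log2 (INR (cnt (eq_pair eqbl eqbl) (paths n) (fun w => (X w, Y w)) w)))
                 (paths n).
Proof.
  assert (Hrefl : forall x, eqbl x x = true) by (intros; now apply eqbl_spec).
  unfold cond_entropy. rewrite !entropy_counts
    by (intros; unfold eqbl2; rewrite ?Hrefl; reflexivity).
  rewrite <- Rmult_minus_distr_l, <- sumR_minus. f_equal.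
  apply sumR_ext. intros w _. unfold eqbl2. fold (eq_pair eqbl eqbl). ring.
Qed.

(** A reference law on boolean vectors: coordinates flagged [true] in the mask
    [fs] are fair coin flips, the others are surely [false]. *)
Fixpoint mask_kernel (v fs : list bool) : R :=
  match v, fs with
  | [], _ => 1
  | b :: v', [] => / 2 * mask_kernel v' []
  | b :: v', f :: fs' => (if f then / 2 else if b then 0 else 1) * mask_kernel v' fs'
  end.

Fixpoint bool_vectors (m : nat) : list (list bool) :=
  match m with
  | O => [[]]
  | S m => map (cons false) (bool_vectors m) ++ map (cons true) (bool_vectors m)
  end.

Lemma bool_vectors_In v : In v (bool_vectors (length v)).
Proof.
  induction v as [|b v IH]; simpl; auto.
  apply in_or_app. destruct b; [right|left]; now apply in_map.
Qed.

Lemma bool_vectors_NoDup m : NoDup (bool_vectors m).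
Proof.
  induction m as [|m IH]; simpl; [repeat constructor; simpl; tauto|].
  apply NoDup_app; try (apply Injective_map_NoDup; [intros x y H; now inversion H | auto]).
  intros v H1 H2. apply in_map_iff in H1, H2.
  destruct H1 as [x [<- _]], H2 as [y [E _]]. discriminate.
Qed.

Lemma mask_kernel_nonneg v fs : 0 <= mask_kernel v fs.
Proof.
  revert fs; induction v as [|b v IH]; intros [|f fs]; simpl; try lra.
  - specialize (IH []); lra.
  - specialize (IH fs). destruct f; [|destruct b]; lra.
Qed.

Lemma mask_kernel_mass m fs : sumR (fun v => mask_kernel v fs) (bool_vectors m) = 1.
Proof.
  revert fs; induction m as [|m IH]; intros fs; [unfold sumR; simpl; lra|].
  simpl bool_vectors. rewrite sumR_app, !sumR_map.
  destruct fs as [|f fs]; simpl; rewrite !sumR_scal, IH; [|destruct f]; lra.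
Qed.

Lemma mask_kernel_of_map {T} (f g : T -> bool) (L : list T) :
  (forall x, In x L -> f x = true -> g x = true) ->
  mask_kernel (map f L) (map g L) = (/ 2) ^ length (filter g L).
Proof.
  induction L as [|x L IH]; intros H; simpl; auto.
  rewrite IH by auto with datatypes. destruct (g x) eqn:E; simpl; [reflexivity|].
  destruct (f x) eqn:F; [rewrite (H x) in E; auto with datatypes; discriminate | lra].
Qed.

Lemma in_Zrange a b x : In x (Zrange a b) <-> (a <= x <= b)%Z.
Proof.
  unfold Zrange. rewrite in_map_iff. split.
  - intros [i [<- Hi]]. apply in_seq in Hi. lia.
  - intros H. exists (Z.to_nat (x - a)). split; [lia|]. apply in_seq. lia.
Qed.

Lemma Zrange_length a b : length (Zrange a b) = Z.to_nat (b - a + 1).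
Proof. unfold Zrange. now rewrite length_map, length_seq. Qed.

Lemma Zrange_NoDup a b : NoDup (Zrange a b).
Proof. unfold Zrange. apply Injective_map_NoDup; [intros x y H; lia | apply seq_NoDup]. Qed.

Definition grid_axis (k n : nat) : list Z :=
  filter (fun i => Z.leb (Z.abs (side k * i)) (2 * Z.of_nat n))
         (Zrange (- (2 * Z.of_nat n)) (2 * Z.of_nat n)).

Lemma lam_grid_prod k n : lam_grid k n = list_prod (grid_axis k n) (grid_axis k n).
Proof. unfold lam_grid, grid_axis. now rewrite list_prod_as_flat_map. Qed.

Lemma in_grid_axis k n i : In i (grid_axis k n) <-> (Z.abs (side k * i) <= 2 * Z.of_nat n)%Z.
Proof.
  unfold grid_axis. rewrite filter_In, in_Zrange, Z.leb_le.
  assert (Z.abs (side k * i) = side k * Z.abs i)%Z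
    by (rewrite Z.abs_mul; unfold side; f_equal; lia).
  unfold side in *. split; [tauto|]. intros; split; auto. nia.
Qed.

Lemma grid_axis_NoDup k n : NoDup (grid_axis k n).
Proof. apply NoDup_filter, Zrange_NoDup. Qed.

(** Coarse-graining: [2l+1] consecutive fine multipliers, centred at
    [(2l+1) c], form the coarse multiplier [c]. *)
Definition coarse_index (l : nat) (i : Z) : Z := ((i + Z.of_nat l) / (2 * Z.of_nat l + 1))%Z.

Lemma coarse_index_spec l i :
  (- Z.of_nat l <= i - (2 * Z.of_nat l + 1) * coarse_index l i <= Z.of_nat l)%Z.
Proof.
  unfold coarse_index.
  pose proof (Z.div_mod (i + Z.of_nat l) (2 * Z.of_nat l + 1)).
  pose proof (Z.mod_pos_bound (i + Z.of_nat l) (2 * Z.of_nat l + 1)). lia.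
Qed.

Definition coarse_cell (l : nat) (ij : Z * Z) : Z * Z :=
  (coarse_index l (fst ij), coarse_index l (snd ij)).

(** The scale [k' = (2l+1)k + l] of the theorem: [Q(z',k')] at
    [z' = (2k'+1)(coarse_cell ij)] contains [Q((2k+1) ij, k)]. *)
Definition coarse_scale (k l : nat) : nat := ((2 * l + 1) * k + l)%nat.

Lemma eqZ2_spec a b : eqZ2 a b = true <-> a = b.
Proof.
  destruct a, b; unfold eqZ2; simpl. rewrite andb_true_iff, !Z.eqb_eq.
  split; [intros [-> ->]; auto | intros H; inversion H; auto].
Qed.

Lemma inQ_spec z k a : inQ z k a = true <->
  (Z.abs (fst a - fst z) <= Z.of_nat k /\ Z.abs (snd a - snd z) <= Z.of_nat k)%Z.
Proof. unfold inQ. now rewrite andb_true_iff, !Z.leb_le. Qed.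

Lemma Ind_spec z k p : Ind z k p = true <->
  exists a, In a (range p) /\ in_inner_boundary (range p) a = true /\ inQ z k a = true.
Proof.
  unfold Ind. rewrite existsb_exists. split.
  - intros [a [H1 H2]]. apply andb_true_iff in H2. exists a; tauto.
  - intros [a [H1 [H2 H3]]]. exists a. now rewrite H2, H3.
Qed.

Lemma walk_bound x p a : In a (walk_from x p) ->
  (Z.abs (fst a - fst x) <= Z.of_nat (length p) /\ Z.abs (snd a - snd x) <= Z.of_nat (length p))%Z.
Proof.
  revert x; induction p as [|d p IH]; intros x H; simpl in H.
  - destruct H as [<-|[]]. simpl. lia.
  - destruct H as [<-|H]; [simpl; lia|]. apply IH in H. simpl length.
    destruct d as [|[|[|]]]; simpl in H; lia.
Qed.

Lemma paths_length n w : In w (paths n) -> length w = n.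
Proof.
  revert w; induction n as [|n IH]; intros w H; simpl in H.
  - now destruct H as [<-|[]].
  - apply in_flat_map in H. destruct H as [p [Hp H]].
    destruct H as [<-|[<-|[<-|[<-|[]]]]]; simpl; f_equal; auto.
Qed.

Lemma range_bound n w a : In w (paths n) -> In a (range w) ->
  (Z.abs (fst a) <= Z.of_nat n /\ Z.abs (snd a) <= Z.of_nat n)%Z.
Proof.
  intros Hw Ha. apply walk_bound in Ha. rewrite (paths_length n w Hw) in Ha.
  simpl in Ha. now rewrite !Z.sub_0_r in Ha.
Qed.

Lemma nested_box_coord (a i c K L : Z) :
  (0 <= K -> 0 <= L -> -L <= i - (2*L+1)*c <= L -> Z.abs (a - (2*K+1)*i) <= K ->
   Z.abs (a - (2*((2*L+1)*K+L)+1)*c) <= (2*L+1)*K+L)%Z.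
Proof.
  intros HK HL Hr Ha. set (r := (i - (2*L+1)*c)%Z) in *.
  replace (a - (2*((2*L+1)*K+L)+1)*c)%Z with ((a - (2*K+1)*i) + (2*K+1)*r)%Z by (unfold r; ring).
  assert (Z.abs ((2*K+1)*r) <= (2*K+1)*L)%Z
    by (rewrite Z.abs_mul, (Z.abs_eq (2*K+1)) by lia; nia).
  pose proof (Z.abs_triangle (a - (2*K+1)*i) ((2*K+1)*r)). nia.
Qed.

Lemma Ind_coarse k l p ij : Ind (lam_pt k ij) k p = true ->
  Ind (lam_pt (coarse_scale k l) (coarse_cell l ij)) (coarse_scale k l) p = true.
Proof.
  rewrite !Ind_spec. intros [a [H1 [H2 H3]]]. exists a. do 2 (split; auto).
  rewrite inQ_spec in *. destruct ij as [i j], a as [a1 a2].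
  unfold lam_pt, coarse_cell, coarse_scale, side in *; cbn [fst snd] in *.
  pose proof (coarse_index_spec l i). pose proof (coarse_index_spec l j).
  replace (Z.of_nat ((2*l+1)*k+l)) with ((2*Z.of_nat l+1)*Z.of_nat k + Z.of_nat l)%Z by lia.
  destruct H3. split; [apply nested_box_coord with (i := i) | apply nested_box_coord with (i := j)]; lia.
Qed.

Lemma window_coord (a g n K : Z) :
  (0 <= K -> 0 <= n -> Z.abs a <= n -> Z.abs (a - (2*K+1)*g) <= K ->
   Z.abs ((2*K+1)*g) <= 2*n /\ Z.abs g <= n + K)%Z.
Proof.
  intros HK Hn Ha Hg. assert (H1 : (Z.abs ((2*K+1)*g) <= n + K)%Z) by lia.
  rewrite Z.abs_mul, (Z.abs_eq (2*K+1)) in H1 |- * by lia.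
  destruct (Z.eq_dec g 0) as [->|Hz]; [rewrite Z.abs_0, Z.mul_0_r; lia|].
  assert (1 <= Z.abs g)%Z by lia. nia.
Qed.

Lemma Ind_window k n p g : In p (paths n) -> Ind (lam_pt k g) k p = true ->
  (Z.abs (side k * fst g) <= 2 * Z.of_nat n /\ Z.abs (fst g) <= Z.of_nat n + Z.of_nat k /\
   Z.abs (side k * snd g) <= 2 * Z.of_nat n /\ Z.abs (snd g) <= Z.of_nat n + Z.of_nat k)%Z.
Proof.
  intros Hp H. apply Ind_spec in H. destruct H as [a [H1 [_ H3]]].
  apply inQ_spec in H3. pose proof (range_bound n p a Hp H1) as Hb.
  destruct g as [g1 g2], a as [a1 a2]. unfold lam_pt, side in *; cbn [fst snd] in *.
  destruct H3, Hb.
  destruct (window_coord a1 g1 (Z.of_nat n) (Z.of_nat k)); try lia.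
  destruct (window_coord a2 g2 (Z.of_nat n) (Z.of_nat k)); lia.
Qed.

Lemma Ind_in_grid k n p g : In p (paths n) -> Ind (lam_pt k g) k p = true -> In g (lam_grid k n).
Proof.
  intros Hp H. destruct (Ind_window k n p g Hp H) as [h1 [_ [h2 _]]].
  rewrite lam_grid_prod. destruct g as [g1 g2]. apply in_prod_iff. now rewrite !in_grid_axis.
Qed.

Lemma count_by_fibres {A B} (phi : A -> B) (eqB : B -> B -> bool)
    (eqB_spec : forall x y, eqB x y = true <-> x = y) (K : nat) (V : list B) :
  forall (P : A -> bool) (L : list A),
  (forall x, In x L -> P x = true -> In (phi x) V) ->
  (forall g, In g V -> (length (filter (fun x => eqB (phi x) g) L) <= K)%nat) ->
  (length (filter P L) <= K * length V)%nat.
Proof.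
  induction V as [|g V IH]; intros P L HV Hfib.
  - destruct (filter P L) as [|x ?] eqn:E; simpl; [lia|].
    assert (Hx : In x (filter P L)) by (rewrite E; now left).
    apply filter_In in Hx. destruct Hx as [Hx HPx]. destruct (HV x Hx HPx).
  - set (Fg := fun x => eqB (phi x) g).
    assert (Hsplit : (length (filter P L) <=
                      length (filter Fg L) + length (filter (fun x => P x && negb (Fg x)) L))%nat).
    { clear. induction L as [|x L IH]; simpl; [lia|]. destruct (P x), (Fg x); simpl; lia. }
    assert (length (filter Fg L) <= K)%nat by (apply Hfib; now left).
    assert (length (filter (fun x => P x && negb (Fg x)) L) <= K * length V)%nat.
    { apply IH.
      - intros x Hx Hp. apply andb_true_iff in Hp. destruct Hp as [Hp Hn].
        destruct (HV x Hx Hp) as [E|E]; auto. unfold Fg in Hn.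
        rewrite <- E, (proj2 (eqB_spec g g) eq_refl) in Hn. discriminate.
      - intros g' Hg'. apply Hfib. now right. }
    simpl length. lia.
Qed.

Lemma filter_row_length {A B} (f : A -> bool) (h : B -> bool) x J :
  length (filter (fun p => f (fst p) && h (snd p)) (map (fun y => (x, y)) J)) =
  if f x then length (filter h J) else 0%nat.
Proof.
  induction J as [|b J IH]; simpl; [now destruct (f x)|].
  destruct (f x), (h b); simpl; rewrite IH; auto.
Qed.

Lemma filter_prod_length {A B} (f : A -> bool) (h : B -> bool) I J :
  length (filter (fun p => f (fst p) && h (snd p)) (list_prod I J)) =
  (length (filter f I) * length (filter h J))%nat.
Proof.
  induction I as [|x I IH]; simpl; auto.
  rewrite filter_app, length_app, IH, filter_row_length. destruct (f x); simpl; lia.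
Qed.

Lemma coarse_index_fibre l I c : NoDup I ->
  (length (filter (fun i => Z.eqb (coarse_index l i) c) I) <= 2 * l + 1)%nat.
Proof.
  intros Hnd.
  replace (2 * l + 1)%nat with (length (Zrange ((2 * Z.of_nat l + 1) * c - Z.of_nat l)
                                               ((2 * Z.of_nat l + 1) * c + Z.of_nat l)))
    by (rewrite Zrange_length; lia).
  apply NoDup_incl_length; [now apply NoDup_filter|].
  intros i Hi. apply filter_In in Hi. destruct Hi as [_ Hi]. apply Z.eqb_eq in Hi.
  pose proof (coarse_index_spec l i). rewrite Hi in *. apply in_Zrange. lia.
Qed.

Lemma coarse_cell_fibre k n l g :
  (length (filter (fun ij => eqZ2 (coarse_cell l ij) g) (lam_grid k n)) <= (2 * l + 1) ^ 2)%nat.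
Proof.
  rewrite lam_grid_prod.
  rewrite (filter_ext _ (fun p => Z.eqb (coarse_index l (fst p)) (fst g) &&
                                  Z.eqb (coarse_index l (snd p)) (snd g))) by reflexivity.
  rewrite (filter_prod_length (fun i => Z.eqb (coarse_index l i) (fst g))
                             (fun j => Z.eqb (coarse_index l j) (snd g))).
  simpl Nat.pow. rewrite Nat.mul_1_r.
  apply Nat.mul_le_mono; apply coarse_index_fibre, grid_axis_NoDup.
Qed.

(** The fine cell [ij] is covered when the coarse box containing it meets the
    boundary; [coarse_mask] reads these flags off the coarse vector [∂(k',n)]. *)
Definition coarse_flag (k l n : nat) (w : list nat) (ij : Z * Z) : bool :=
  existsb (fun g => eqZ2 g (coarse_cell l ij) && Ind (lam_pt (coarse_scale k l) g) (coarse_scale k l) w)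
          (lam_grid (coarse_scale k l) n).

Definition coarse_mask (k l n : nat) (y : list bool) : list bool :=
  map (fun ij => existsb (fun gy => eqZ2 (fst gy) (coarse_cell l ij) && snd gy)
                         (combine (lam_grid (coarse_scale k l) n) y))
      (lam_grid k n).

Definition covered (k l n : nat) (w : list nat) : nat :=
  length (filter (coarse_flag k l n w) (lam_grid k n)).

Lemma coarse_mask_bvec k l n w :
  coarse_mask k l n (bvec (coarse_scale k l) n w) = map (coarse_flag k l n w) (lam_grid k n).
Proof.
  unfold coarse_mask, bvec. apply map_ext. intros ij. unfold coarse_flag.
  generalize (lam_grid (coarse_scale k l) n) as G.
  induction G as [|g G IH]; simpl; [reflexivity | now rewrite IH].
Qed.

Lemma coarse_flag_of_Ind k l n w ij : In w (paths n) ->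
  Ind (lam_pt k ij) k w = true -> coarse_flag k l n w ij = true.
Proof.
  intros Hw H. apply existsb_exists. exists (coarse_cell l ij).
  assert (H' := Ind_coarse k l w ij H).
  split; [now apply Ind_in_grid with w|].
  now rewrite H', (proj2 (eqZ2_spec _ _) eq_refl).
Qed.

(** Gibbs' inequality with the mask kernel of [coarse_mask]: the conditional
    entropy is at most the expected number of covered fine cells. *)
Lemma cond_entropy_le_covered k l n :
  cond_entropy n (bvec k n) (bvec (coarse_scale k l) n)
  <= / 4 ^ n * sumR (fun w => INR (covered k l n w)) (paths n).
Proof.
  rewrite cond_entropy_counts.
  apply Rmult_le_compat_l; [left; apply Rinv_0_lt_compat, pow_lt; lra|].
  assert (Hq : forall w, In w (paths n) ->
    mask_kernel (bvec k n w) (coarse_mask k l n (bvec (coarse_scale k l) n w))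
    = (/ 2) ^ covered k l n w).
  { intros w Hw. rewrite coarse_mask_bvec. unfold bvec at 1.
    apply mask_kernel_of_map. intros ij _. now apply coarse_flag_of_Ind. }
  eapply Rle_trans.
  - apply (gibbs_counts _ _ _ eqbl eqbl eqbl_spec eqbl_spec (paths n) (bvec k n)
             (bvec (coarse_scale k l) n) (bool_vectors (length (lam_grid k n)))
             (fun x y => mask_kernel x (coarse_mask k l n y))).
    + apply bool_vectors_NoDup.
    + intros w _. unfold bvec at 1. rewrite <- (length_map (fun ij => Ind (lam_pt k ij) k w)).
      apply bool_vectors_In.
    + intros. apply mask_kernel_nonneg.
    + intros y. now rewrite mask_kernel_mass.
    + intros w Hw. rewrite Hq by auto. apply pow_lt. lra.
  - right. apply sumR_ext. intros w Hw. now rewrite Hq, log2_half_pow, Ropp_involutive.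
Qed.

(** Each covered fine cell lies in one of the [M(k',n)] coarse boxes meeting
    the boundary, and each coarse box holds at most [(2l+1)^2] fine cells. *)
Lemma covered_le_Mcount k l n w : In w (paths n) ->
  (covered k l n w <= (2 * l + 1) ^ 2 * Mcount (coarse_scale k l) n w)%nat.
Proof.
  intros Hw. unfold covered, Mcount.
  apply (count_by_fibres (coarse_cell l) eqZ2 eqZ2_spec).
  - intros ij _ Hflag. apply filter_In. apply existsb_exists in Hflag.
    destruct Hflag as [g [_ Hg]]. apply andb_true_iff in Hg. destruct Hg as [E HI].
    apply eqZ2_spec in E. subst g. split; auto.
    destruct (Ind_window _ n w _ Hw HI) as [_ [h1 [_ h2]]].
    destruct (coarse_cell l ij) as [g1 g2]. cbn [fst snd] in *.
    apply in_flat_map. exists g1. split; [apply in_Zrange; lia|].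
    apply in_map_iff. exists g2. split; [reflexivity | apply in_Zrange; lia].
  - intros g _. apply coarse_cell_fibre.
Qed.

Theorem mainTheorem14 (k l n : nat) :
  let k' := ((2 * l + 1) * k + l)%nat in
  cond_entropy n (bvec k n) (bvec k' n)
    <= expect n (fun w => INR (Mcount k' n w)) * INR ((2 * l + 1) ^ 2).
Proof.
  intros k'. change k' with (coarse_scale k l).
  eapply Rle_trans; [apply cond_entropy_le_covered|].
  unfold expect, Rdiv.
  rewrite (sumR_ext (fun w => INR (Mcount (coarse_scale k l) n w) * / 4 ^ n)
                    (fun w => / 4 ^ n * INR (Mcount (coarse_scale k l) n w)))
    by (intros; ring).
  rewrite sumR_scal, Rmult_assoc.
  apply Rmult_le_compat_l; [left; apply Rinv_0_lt_compat, pow_lt; lra|].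
  rewrite Rmult_comm, <- sumR_scal.
  apply sumR_le. intros w Hw. rewrite <- mult_INR. now apply le_INR, covered_le_Mcount.
Qed.
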